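(* Assume the bounded-cost assumption. Let agent $j\in[J]$ use POMWU with learning rate $\eta>0$, and let the contexts $Z_1,\dots,Z_T$, the predictions $\hat Z^j_1,\dots,\hat Z^j_T$ and the other agents' strategies be arbitrary. Then $$\mathrm{Reg}^j_T\le\frac{(5+\ln K)L^j_T+m\ln K}{\eta}+\eta\Big(\sum_{z\in\mathcal Z}\sum_{i=1}^{n_z}\big\|(\Phi^j_{z,i}-\Phi^j_{z,i-1})^\top z\big\|_\infty^2+4L^j_T\Big)-\frac{1}{16\eta}\sum_{z\in\mathcal Z}\sum_{i=1}^{n_z}\big\|w^j_{z,i}-w^j_{z,i-1}\big\|_1^2 .$$
   Context: Setting. There are $J\ge1$ agents indexed by $j\in[J]$. Agent $j$ has a finite action set $\mathcal A^j=\{a^j_1,\dots,a^j_K\}$ with $K$ elements; $\mathcal A=\prod_i\mathcal A^i$, $\mathcal A^{-j}=\prod_{i\ne j}\mathcal A^i$. $\Delta_K$ is the probability simplex in $\mathbb R^K$, $w\in\Delta_K$ identified with a distribution on $\mathcal A^j$; $\mathscr P(S)$ is the set of distributions on a finite set $S$. The context set $\mathcal Z=\{z_1,\dots,z_m\}\subset\mathbb R^d$ is finite with $m$ elements. Agent $j$ has $\phi^j:\mathcal A\to\mathbb R^d$ and cost $c^j(\mathbf w,Z)=\mathbb E_{\mathbf a\sim\mathbf w}[\langle\phi^j(\mathbf a),Z\rangle]$; $c^j(w,\mathbf w^{-j},Z)=c^j(w\otimes\mathbf w^{-j},Z)$. $\Phi^j(\mathbf w^{-j})\in\mathbb R^{d\times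 K}$ has entries $\Phi^j(\mathbf w^{-j})_{\ell,k}=\mathbb E_{\mathbf a^{-j}\sim\mathbf w^{-j}}[\phi^j(a^j_k,\mathbf a^{-j})[\ell]]$, so $c^j(w,\mathbf w^{-j},Z)=\langle Z,\Phi^j(\mathbf w^{-j})w\rangle$. Bounded-cost assumption: $|\langle Z,\phi^j(\mathbf a)\rangle|\le1$ for all $j,\mathbf a\in\mathcal A,Z\in\mathcal Z$. Game protocol: $T$ rounds, fixed sequence $Z_1,\dots,Z_T\in\mathcal Z$; at round $t$ each agent $j$ receives a prediction $\hat Z^j_t\in\mathcal Z$, plays $w^j_t\in\Delta_K$ as a function of past feedback and $\hat Z^j_t$, incurs $c^j(w^j_t,\mathbf w^{-j}_t,Z_t)$ with $\mathbf w^{-j}_t=\bigotimes_{i\ne j}w^i_t$, and observes $Z_t$ and $\Phi^j(\mathbf w^{-j}_t)$. $\mathscr T^z=\{t:Z_t=z\}=\{t^z_1<\dots<t^z_{n_z}\}$, $n_z=|\mathscr T^z|$; $L^j_T=\sum_{t=1}^T\mathbf 1\{\hat Z^j_t\ne Z_t\}$. Contextual external regret: $\mathrm{Reg}^j_T=\sum_{t=1}^Tc^j(w^j_t,\mathbf w^{-j}_t,Z_t)-\min_{\pi:\mathcal Z\to\Delta_K}\sum_{t=1}^Tc^j(\pi(Z_t),\mathbf w^{-j}_t,Z_t)$. POMWU with learning rate $\eta>0$ (for agent $j$): maintain for each $z\in\mathcal Z$ a vector $\rho_z\in\mathbb R^K_{>0}$, initialized to $(1/K,\dots,1/K)$, and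 a matrix $\Psi_z\in\mathbb R^{d\times K}$, initialized to $0$. At round $t$, with $\hat Z=\hat Z^j_t$, play $w^j_t[\ell]=\rho_{\hat Z}[\ell]\exp(-\eta(\Psi_{\hat Z}^\top\hat Z)[\ell])/\sum_{k=1}^K\rho_{\hat Z}[k]\exp(-\eta(\Psi_{\hat Z}^\top\hat Z)[k])$. After observing $Z_t$ and $\Phi_t=\Phi^j(\mathbf w^{-j}_t)$, set $\Psi_{Z_t}\leftarrow\Phi_t$ and $\rho_{Z_t}[\ell]\leftarrow\rho_{Z_t}[\ell]\exp(-\eta(\Phi_t^\top Z_t)[\ell])$ for all $\ell$. Notation: $\Phi^j_{z,i}=\Phi^j(\mathbf w^{-j}_{t^z_i})$, $w^j_{z,i}=w^j_{t^z_i}$ for $1\le i\le n_z$, with conventions $\Phi^j_{z,0}=0\in\mathbb R^{d\times K}$ and $w^j_{z,0}=(1/K,\dots,1/K)$. *)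

From HB Require Import structures.
From mathcomp Require Import all_boot all_order all_algebra.
From mathcomp Require Import boolp classical_sets reals sequences exp.
Set Implicit Arguments. Unset Strict Implicit. Unset Printing Implicit Defensive.
Import Order.TTheory GRing.Theory Num.Theory.
Local Open Scope ring_scope.
Local Open Scope classical_set_scope.

Definition simplex (R : numDomainType) (K : nat) (w : 'cV[R]_K) : Prop :=
  (forall k, 0 <= w k 0) /\ \sum_(k < K) w k 0 = 1.

Definition dotc (R : numDomainType) (n : nat) (u v : 'cV[R]_n) : R :=
  \sum_(i < n) u i 0 * v i 0.

Definition normInf (R : numDomainType) (n : nat) (v : 'cV[R]_n) : R :=
  \big[Num.max/0]_(i < n) `|v i 0|.
Definition norm1 (R : numDomainType) (n : nat) (v : 'cV[R]_n) : R :=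
  \sum_(i < n) `|v i 0|.

Definition unif (R : numFieldType) (K : nat) : 'cV[R]_K := const_mx (K%:R^-1).

Definition with_j (R : numDomainType) (J K : nat) (j : 'I_J) (w : 'cV[R]_K)
  (W : 'I_J -> 'cV[R]_K) : 'I_J -> 'cV[R]_K :=
  fun i => if i == j then w else W i.

(* Cost c^j(w, Z) = E_{a ~ (x)_i W i}[ <phi^j(a), Z> ], joint actions a : 'I_J -> 'I_K. *)
Definition cost (R : numDomainType) (J K d : nat)
  (phij : {ffun 'I_J -> 'I_K} -> 'cV[R]_d) (W : 'I_J -> 'cV[R]_K) (z : 'cV[R]_d) : R :=
  \sum_(a : {ffun 'I_J -> 'I_K}) (\prod_(i < J) W i (a i) 0) * dotc z (phij a).

(* Phi^j(w^{-j})_{l,k} = E_{a^{-j} ~ w^{-j}} [ phi^j(a^j_k, a^{-j})[l] ]: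
   joint actions a with a j = k, weighted by the product over i <> j. *)
Definition PhiM (R : numDomainType) (J K d : nat) (j : 'I_J)
  (phij : {ffun 'I_J -> 'I_K} -> 'cV[R]_d) (W : 'I_J -> 'cV[R]_K) : 'M[R]_(d, K) :=
  \matrix_(l < d, k < K)
    \sum_(a : {ffun 'I_J -> 'I_K} | a j == k) (\prod_(i < J | i != j) W i (a i) 0) * phij a l 0.

(* POMWU state after t rounds (rounds indexed 0,1,...): for each context index z,
   the vector rho_z and the matrix Psi_z. Contexts are indices into zs : 'I_m -> R^d. *)
Fixpoint pomwu_state (R : realType) (K d m : nat) (eta : R) (zs : 'I_m -> 'cV[R]_d)
  (Z : nat -> 'I_m) (Phi : nat -> 'M[R]_(d, K)) (t : nat)
  : ('I_m -> 'cV[R]_K) * ('I_m -> 'M[R]_(d, K)) :=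
  match t with
  | 0 => (fun _ => unif R K, fun _ => 0)
  | t'.+1 =>
      let st := pomwu_state eta zs Z Phi t' in
      (fun z => if z == Z t' then
                  \col_(l < K) (st.1 z l 0 * expR (- eta * ((Phi t')^T *m zs (Z t')) l 0))
                else st.1 z,
       fun z => if z == Z t' then Phi t' else st.2 z)
  end.

Definition pomwu_play (R : realType) (K d m : nat) (eta : R) (zs : 'I_m -> 'cV[R]_d)
  (Z Zhat : nat -> 'I_m) (Phi : nat -> 'M[R]_(d, K)) (t : nat) : 'cV[R]_K :=
  let st := pomwu_state eta zs Z Phi t in
  let zh := Zhat t in
  let u := \col_(l < K) (st.1 zh l 0 * expR (- eta * ((st.2 zh)^T *m zs zh) l 0)) in
  (\sum_(k < K) u k 0)^-1 *: u.

(* T^z = {t < T : Z_t = z} listed increasingly: t^z_1 < ... < t^z_{n_z}. *)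
Definition occ (m : nat) (Z : nat -> 'I_m) (T : nat) (z : 'I_m) : seq nat :=
  [seq t <- iota 0 T | Z t == z].

(* Phi_{z,i} (i = 0 gives the zero matrix) and w_{z,i} (i = 0 gives uniform). *)
Definition PhiZ (R : numDomainType) (K d m : nat) (Phi : nat -> 'M[R]_(d, K))
  (Z : nat -> 'I_m) (T : nat) (z : 'I_m) (i : nat) : 'M[R]_(d, K) :=
  if i is i'.+1 then Phi (nth 0%N (occ Z T z) i') else 0.
Definition wZ (R : numFieldType) (K m : nat) (w : nat -> 'cV[R]_K)
  (Z : nat -> 'I_m) (T : nat) (z : 'I_m) (i : nat) : 'cV[R]_K :=
  if i is i'.+1 then w (nth 0%N (occ Z T z) i') else unif R K.

Definition Lmiss (R : numDomainType) (m : nat) (Z Zhat : nat -> 'I_m) (T : nat) : R :=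
  \sum_(t < T) (Zhat t != Z t)%:R.

Definition regret (R : realType) (J K d m : nat) (j : 'I_J)
  (phij : {ffun 'I_J -> 'I_K} -> 'cV[R]_d) (zs : 'I_m -> 'cV[R]_d) (Z : nat -> 'I_m)
  (W : nat -> 'I_J -> 'cV[R]_K) (w : nat -> 'cV[R]_K) (T : nat) : R :=
  \sum_(t < T) cost phij (with_j j (w t) (W t)) (zs (Z t))
  - inf [set \sum_(t < T) cost phij (with_j j (pi (Z t)) (W t)) (zs (Z t))
         | pi in [set pi : 'I_m -> 'cV[R]_K | forall z, simplex (pi z)]].

(* For a fixed context z, the rounds t^z_1 < t^z_2 < ... at which z occurs see
   the losses l_i = Phi_{z,i}^T z, and whenever the prediction of such a round
   is correct POMWU plays exactly the optimistic multiplicative-weights iterate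
   x_i = Gibbs(l_1 + ... + l_{i-1} + l_{i-1}) of this sequence.  The classical
   optimistic bound for x -- the Bregman identity of the log-partition
   potential, Pinsker's inequality, and Hoelder plus Young on the hint error
   l_i - l_{i-1} -- gives
     ln K / eta + eta sum_i |l_i - l_{i-1}|_oo^2 - (8 eta)^-1 sum_i |x_i - x_{i-1}|_1^2.
   A mispredicted round changes the regret by at most |l_i|_oo |w - x_i|_1 <= 2
   and each of the two adjacent movement terms by at most 4, which is paid for
   by halving the movement term.  Summing over contexts, the surplus
   (2 + 1/eta) L is below (5 + ln K) L / eta + 4 eta L because 2 <= 4/eta + 4 eta. *)

From HB Require Import structures.
From mathcomp Require Import all_boot all_order all_algebra.
From mathcomp Require Import boolp classical_sets functions reals sequences exp.
From mathcomp Require Import topology normedtype derive.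
From mathcomp Require Import ring lra.
Set Implicit Arguments. Unset Strict Implicit. Unset Printing Implicit Defensive.
Import Order.TTheory GRing.Theory Num.Theory numFieldNormedType.Exports.
Local Open Scope ring_scope.

Section FiniteVectors.
Variables (R : realDomainType) (K : nat).
Implicit Types (u v p q : 'I_K -> R).

Definition dotf u v := \sum_k u k * v k.
Definition norm1f v := \sum_k `|v k|.
Definition normInff v := \big[Num.max/0]_k `|v k|.
Definition simplexf p := (forall k, 0 <= p k) /\ \sum_k p k = 1.

Lemma dotfC u v : dotf u v = dotf v u.
Proof. by apply: eq_bigr => k _; rewrite mulrC. Qed.

Lemma dotfBr l u v : dotf l (u - v) = dotf l u - dotf l v.
Proof. by rewrite /dotf -sumrB; apply: eq_bigr => k _; rewrite !fctE mulrBr. Qed.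

Lemma norm1f_ge0 v : 0 <= norm1f v.
Proof. exact: sumr_ge0. Qed.

Lemma norm1f_distC u v : norm1f (u - v) = norm1f (v - u).
Proof. by apply: eq_bigr => k _; rewrite !fctE distrC. Qed.

Lemma norm1fD u v : norm1f (u + v) <= norm1f u + norm1f v.
Proof. by rewrite /norm1f -big_split; apply: ler_sum => k _; apply: ler_normD. Qed.

Lemma sqr_norm1f_sub_le u v w :
  norm1f (u - v) ^+ 2 <= 2 * norm1f (u - w) ^+ 2 + 2 * norm1f (v - w) ^+ 2.
Proof.
have : norm1f (u - v) <= norm1f (u - w) + norm1f (v - w).
  rewrite [norm1f (v - w)]norm1f_distC; apply: le_trans (norm1fD _ _).
  by rewrite addrA subrK.
rewrite -ler_sqr ?nnegrE ?addr_ge0 ?norm1f_ge0 //.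
have := sqr_ge0 (norm1f (u - w) - norm1f (v - w)); rewrite sqrrB sqrrD; lra.
Qed.

Lemma normInff_ge0 v : 0 <= normInff v.
Proof. exact: bigmax_ge_id. Qed.

Lemma normInff_le v c : 0 <= c -> (forall k, `|v k| <= c) -> normInff v <= c.
Proof. by move=> c_ge0 vc; apply: bigmax_le. Qed.

Lemma dotf_le_norm1f_normInff u v : dotf u v <= norm1f u * normInff v.
Proof.
rewrite /dotf /norm1f mulr_suml; apply: ler_sum => k _.
apply: le_trans (ler_norm _) _; rewrite normrM.
by apply: ler_wpM2l => //; apply: le_bigmax.
Qed.

Lemma norm1f_sub_simplexf p q : simplexf p -> simplexf q -> norm1f (p - q) <= 2.
Proof.
move=> [p_ge0 p_sum] [q_ge0 q_sum]; apply: le_trans (norm1fD p (- q)) _.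
have -> : norm1f (- q) = norm1f q by apply: eq_bigr => k _; exact: normrN.
rewrite /norm1f (eq_bigr _ (fun k _ => ger0_norm (p_ge0 k))).
by rewrite (eq_bigr _ (fun k _ => ger0_norm (q_ge0 k))) p_sum q_sum.
Qed.

Lemma sqr_norm1f_sub_simplexf p q : simplexf p -> simplexf q ->
  norm1f (p - q) ^+ 2 <= 4.
Proof.
move=> /norm1f_sub_simplexf /[apply] le2.
have -> : 4 = 2 ^+ 2 :> R by rewrite expr2 -natrM.
by rewrite ler_sqr ?nnegrE ?norm1f_ge0.
Qed.

End FiniteVectors.

Lemma cauchy_schwarz_weighted (R : realFieldType) (K : nat) (a c : 'I_K -> R) :
  (forall k, 0 < c k) -> (\sum_k `|a k|) ^+ 2 <= (\sum_k a k ^+ 2 / c k) * \sum_k c k.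
Proof.
move=> c_gt0.
set S := \sum_k `|a k|; set Q := \sum_k a k ^+ 2 / c k; set C := \sum_k c k.
have [C0|C_neq0] := eqVneq C 0.
  suff -> : S = 0 by rewrite expr0n C0 mulr0.
  rewrite /S big1 // => k _; have : c k <= C.
    by rewrite /C (bigD1 k) //= lerDl; apply: sumr_ge0 => i _; apply: ltW.
  by rewrite C0; have := c_gt0 k; lra.
have C_gt0 : 0 < C by rewrite lt_def C_neq0 sumr_ge0 // => k _; apply: ltW.
(* Expand the nonnegative quantity sum_k (|a k| C - S c k)^2 / c k. *)
have : 0 <= \sum_k (`|a k| * C - S * c k) ^+ 2 / c k.
  by apply: sumr_ge0 => k _; apply: divr_ge0; [apply: sqr_ge0 | apply: ltW].
have -> : \sum_k (`|a k| * C - S * c k) ^+ 2 / c k = C ^+ 2 * Q - C * S ^+ 2.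
  rewrite (eq_bigr (fun k => C ^+ 2 * (a k ^+ 2 / c k) - (2 * C * S) * `|a k|
                             + S ^+ 2 * c k)); last first.
    move=> k _; have ckN0 : c k != 0 by rewrite gt_eqF.
    by rewrite -[a k ^+ 2]real_normK ?num_real //; field.
  by rewrite big_split sumrB /= -!mulr_sumr -/S -/Q -/C; ring.
by rewrite mulrC; nra.
Qed.

(** * Pinsker's inequality *)

Section PinskerPointwise.
Variable R : realType.
Local Open Scope classical_set_scope.

(* A rational lower bound of ln touching it at 1: the difference has
   derivative (y - 1)^3 / (y^2 (y + 2)^2), so it is minimal at y = 1. *)
Definition pinsker_gap (y : R) :=
  ln y - (5 * y ^+ 2 - 4 * y - 1) / (2 * y ^+ 2 + 4 * y).

Lemma is_derive_pinsker_gap (y : R) : 0 < y ->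
  is_derive y 1 pinsker_gap ((y - 1) ^+ 3 / (y ^+ 2 * (y + 2) ^+ 2)).
Proof.
move=> y_gt0.
(* Inferring the derivative of the quotient needs its denominator's
   non-vanishing in the context. *)
have qN0 : 2 * y ^+ 2 + 4 * y != 0 by apply: lt0r_neq0; nra.
rewrite /pinsker_gap; apply: is_derive_eq.
  apply: (@is_deriveB _ _ _ (@ln R)
            (fun y => (5 * y ^+ 2 - 4 * y - 1) / (2 * y ^+ 2 + 4 * y))).
  exact: is_derive1_ln.
have yN0 : y != 0 by rewrite gt_eqF.
have y2N0 : y + 2 != 0 by apply: lt0r_neq0; lra.
by rewrite /= /GRing.scale /=; field; rewrite yN0 y2N0 qN0.
Qed.

Lemma derivable_pinsker_gap (y : R) : 0 < y -> derivable pinsker_gap y 1.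
Proof. by move=> /is_derive_pinsker_gap []. Qed.

Lemma derive1_pinsker_gap (y : R) : 0 < y ->
  derive1 pinsker_gap y = (y - 1) ^+ 3 / (y ^+ 2 * (y + 2) ^+ 2).
Proof. by move=> /is_derive_pinsker_gap D; rewrite derive1E derive_val. Qed.

Lemma continuous_pinsker_gap (a b : R) : 0 < a ->
  {within `[a, b], continuous pinsker_gap}.
Proof.
move=> a_gt0; apply: derivable_within_continuous => x.
by rewrite in_itv /= => /andP[ax _]; apply: derivable_pinsker_gap; lra.
Qed.

Lemma pinsker_gap_ge0 (y : R) : 0 < y -> 0 <= pinsker_gap y.
Proof.
have gap1 : pinsker_gap 1 = 0 by rewrite /pinsker_gap ln1; field.
have den_gt0 (x : R) : 0 < x -> 0 < x ^+ 2 * (x + 2) ^+ 2.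
  by move=> x_gt0; apply: mulr_gt0; apply: exprn_gt0; lra.
move=> y_gt0; rewrite -gap1.
have [y_le1|y_gt1] := lerP y 1.
  have dfle0 x : x \in `]y, 1[%R -> derive1 pinsker_gap x <= 0.
    rewrite in_itv /= => /andP[yx x1]; rewrite derive1_pinsker_gap; last lra.
    rewrite pmulr_lle0 ?invr_gt0 ?den_gt0 ?[_ ^+ 3]exprS; try lra.
    have : 0 <= (1 - x) * (x - 1) ^+ 2 by apply: mulr_ge0; [lra | exact: sqr_ge0].
    lra.
  have df x : x \in `]y, 1[%R -> derivable pinsker_gap x 1.
    by rewrite in_itv /= => /andP[yx _]; apply: derivable_pinsker_gap; lra.
  have := ler0_derive1_le_cc df dfle0 (continuous_pinsker_gap (b := 1) y_gt0).
  by move=> /(_ 1 y); apply; rewrite ?in_itv /= ?lexx ?y_le1.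
have dfge0 x : x \in `]1, y[%R -> 0 <= derive1 pinsker_gap x.
  rewrite in_itv /= => /andP[x1 _]; rewrite derive1_pinsker_gap; last lra.
  by apply: divr_ge0; [apply: exprn_ge0; lra | apply/ltW/den_gt0; lra].
have df x : x \in `]1, y[%R -> derivable pinsker_gap x 1.
  by rewrite in_itv /= => /andP[x1 _]; apply: derivable_pinsker_gap; lra.
have := ger0_derive1_le_cc df dfge0 (continuous_pinsker_gap (b := y) ltr01).
by move=> /(_ 1 y); apply; rewrite ?in_itv /= ?lexx ?ltW.
Qed.

Lemma pinsker_pointwise (p q : R) : 0 < p -> 0 < q ->
  3 * (p - q) ^+ 2 / (2 * (p + 2 * q)) <= p * ln (p / q) - p + q.
Proof.
move=> p_gt0 q_gt0; set y := p / q.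
have := ler_wpM2l (ltW p_gt0) (pinsker_gap_ge0 (divr_gt0 p_gt0 q_gt0)).
rewrite -/y /pinsker_gap mulr0 mulrBr subr_ge0.
suff -> : 3 * (p - q) ^+ 2 / (2 * (p + 2 * q)) =
  p * ((5 * y ^+ 2 - 4 * y - 1) / (2 * y ^+ 2 + 4 * y)) - p + q by lra.
have qN0 : q != 0 by rewrite gt_eqF.
have sN0 : p + 2 * q != 0 by apply: lt0r_neq0; lra.
by rewrite /y; field; rewrite qN0 sN0 andbT; apply: lt0r_neq0; nra.
Qed.

End PinskerPointwise.

Definition kl (R : realType) (K : nat) (p q : 'I_K -> R) :=
  \sum_k p k * ln (p k / q k).

Lemma pinsker (R : realType) (K : nat) (p q : 'I_K -> R) :
  (forall k, 0 < p k) -> (forall k, 0 < q k) -> \sum_k p k = 1 -> \sum_k q k = 1 ->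
  norm1f (p - q) ^+ 2 / 2 <= kl p q.
Proof.
move=> p_gt0 q_gt0 p_sum q_sum.
have -> : kl p q = \sum_k (p k * ln (p k / q k) - p k + q k).
  by rewrite big_split /= sumrB p_sum q_sum /kl; ring.
apply: le_trans (ler_sum _ (fun k _ => pinsker_pointwise (p_gt0 k) (q_gt0 k))).
have w_gt0 k : 0 < p k + 2 * q k by have := p_gt0 k; have := q_gt0 k; lra.
have := cauchy_schwarz_weighted (p - q) w_gt0.
have -> : \sum_k (p k + 2 * q k) = 3.
  by rewrite big_split /= -mulr_sumr p_sum q_sum; ring.
have -> : \sum_k 3 * (p k - q k) ^+ 2 / (2 * (p k + 2 * q k)) =
          3 / 2 * \sum_k (p - q) k ^+ 2 / (p k + 2 * q k).
  rewrite mulr_sumr; apply: eq_bigr => k _.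
  by rewrite !fctE; field; rewrite lt0r_neq0.
rewrite /norm1f; lra.
Qed.

(** * Gibbs distributions and the softmin potential *)

Section Gibbs.
Variables (R : realType) (K : nat) (eta : R).
Hypotheses (K_gt0 : (0 < K)%N) (eta_gt0 : 0 < eta).
Implicit Types (G : 'I_K -> R).

Definition partition G := \sum_k expR (- eta * G k).
Definition gibbs G : 'I_K -> R := fun k => expR (- eta * G k) / partition G.
Definition softmin G := - ln (partition G) / eta.

Lemma partition_gt0 G : 0 < partition G.
Proof.
rewrite /partition (bigD1 (Ordinal K_gt0)) //=.
by rewrite ltr_pwDl ?expR_gt0 // sumr_ge0 // => k _; apply: expR_ge0.
Qed.

Lemma gibbs_gt0 G k : 0 < gibbs G k.
Proof. by apply: divr_gt0; [apply: expR_gt0 | apply: partition_gt0]. Qed.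

Lemma gibbs_sum G : \sum_k gibbs G k = 1.
Proof. by rewrite /gibbs -mulr_suml divff // gt_eqF // partition_gt0. Qed.

Lemma gibbs_simplexf G : simplexf (gibbs G).
Proof. by split=> [k|]; [apply/ltW/gibbs_gt0 | apply: gibbs_sum]. Qed.

Lemma softmin_bregman G G' :
  softmin G' = softmin G + dotf (gibbs G) (G' - G) - kl (gibbs G) (gibbs G') / eta.
Proof.
have Z_gt0 := partition_gt0 G; have Z'_gt0 := partition_gt0 G'.
have -> : kl (gibbs G) (gibbs G') =
    eta * dotf (gibbs G) (G' - G) + (ln (partition G') - ln (partition G)).
  rewrite /kl /dotf mulr_sumr.
  rewrite -[X in _ = _ + X]mul1r -(gibbs_sum G) mulr_suml -big_split /=.
  apply: eq_bigr => k _.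
  have -> : gibbs G k / gibbs G' k =
            expR (eta * (G' k - G k)) * (partition G' / partition G).
    have -> : eta * (G' k - G k) = - eta * G k - (- eta * G' k) by ring.
    have eN0 := lt0r_neq0 (expR_gt0 (- eta * G' k)).
    by rewrite /gibbs expRB; field; rewrite eN0 !lt0r_neq0.
  rewrite lnM ?posrE ?expR_gt0 ?divr_gt0 // expRK ln_div ?posrE // !fctE.
  ring.
by rewrite /softmin; field; rewrite gt_eqF.
Qed.

Lemma softmin_le G k : softmin G <= G k.
Proof.
have Z_gt0 := partition_gt0 G.
have : - eta * G k <= ln (partition G).
  rewrite -[X in X <= _]expRK ler_ln ?posrE ?expR_gt0 //.
  by rewrite /partition (bigD1 k) //= lerDl sumr_ge0 // => i _; apply: expR_ge0.
by rewrite /softmin ler_pdivrMr // mulrC; lra.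
Qed.

Lemma softmin_le_dotf G u : simplexf u -> softmin G <= dotf u G.
Proof.
move=> [u_ge0 u_sum]; rewrite -[softmin G]mul1r -u_sum mulr_suml.
by apply: ler_sum => k _; apply: ler_wpM2l => //; apply: softmin_le.
Qed.

Lemma softmin0 : softmin 0 = - ln K%:R / eta.
Proof.
rewrite /softmin /partition (eq_bigr (fun _ => 1)) ?sumr_const ?card_ord //.
by move=> k _; rewrite mulr0 expR0.
Qed.

Lemma gibbs0 : gibbs 0 = fun=> K%:R^-1.
Proof.
apply/funext => k; rewrite /gibbs /partition (eq_bigr (fun _ => 1)).
  by rewrite sumr_const card_ord mulr0 expR0 div1r.
by move=> i _; rewrite mulr0 expR0.
Qed.

End Gibbs.

Lemma unif_simplexf (R : realFieldType) (K : nat) : (0 < K)%N ->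
  simplexf (fun k => unif R K k 0).
Proof.
move=> K_gt0; split=> [k|]; first by rewrite mxE invr_ge0 ler0n.
under eq_bigr do rewrite mxE.
by rewrite sumr_const card_ord -[_ *+ _]mulr_natr mulVf // pnatr_eq0 -lt0n.
Qed.

(** * Optimistic multiplicative weights *)

Lemma young_mul_le (R : realFieldType) (eta a b : R) : 0 < eta ->
  a * b <= eta * b ^+ 2 + a ^+ 2 / (4 * eta).
Proof.
move=> eta_gt0; rewrite -subr_ge0.
have -> : eta * b ^+ 2 + a ^+ 2 / (4 * eta) - a * b = (2 * eta * b - a) ^+ 2 / (4 * eta).
  by field; rewrite gt_eqF.
by apply: divr_ge0; [apply: sqr_ge0 | apply: mulr_ge0 => //; apply: ltW].
Qed.

Section OptimisticMWU.
Variables (R : realType) (K : nat) (eta : R).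
Hypotheses (K_gt0 : (0 < K)%N) (eta_gt0 : 0 < eta).
Local Notation gibbs := (gibbs eta).
Local Notation softmin := (softmin eta).

Lemma softmin_increment (G M l : 'I_K -> R)
    (x := gibbs (G + M)) (g := gibbs (G + l)) :
  softmin (G + l) - softmin G =
    dotf l x - dotf (x - g) (l - M) + (kl g x + kl x (gibbs G)) / eta.
Proof.
have := softmin_bregman K_gt0 eta_gt0 (G + l) (G + M).
have := softmin_bregman K_gt0 eta_gt0 (G + M) G.
rewrite -/x -/g => -> ->.
have -> : dotf g (G + M - (G + l)) = dotf g M - dotf g l.
  by rewrite /dotf -sumrB; apply: eq_bigr => k _; rewrite !fctE /=; ring.
have -> : dotf x (G - (G + M)) = - dotf x M.
  by rewrite /dotf -sumrN; apply: eq_bigr => k _; rewrite !fctE /=; ring.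
have -> : dotf (x - g) (l - M) = dotf l x - dotf x M - dotf g l + dotf g M.
  rewrite /dotf -!sumrB -big_split /=.
  by apply: eq_bigr => k _; rewrite !fctE /=; ring.
by rewrite mulrDl; ring.
Qed.

Lemma omwu_step (G M l : 'I_K -> R)
    (x := gibbs (G + M)) (g := gibbs (G + l)) :
  dotf l x + norm1f (x - g) ^+ 2 / (4 * eta) + norm1f (x - gibbs G) ^+ 2 / (2 * eta)
  <= softmin (G + l) - softmin G + eta * normInff (l - M) ^+ 2.
Proof.
rewrite (softmin_increment G M l) -/x -/g.
set a := norm1f (x - g); set b := norm1f (x - gibbs G); set D := normInff (l - M).
have hint_err : dotf (x - g) (l - M) <= eta * D ^+ 2 + a ^+ 2 / (4 * eta).
  exact: le_trans (dotf_le_norm1f_normInff _ _) (young_mul_le _ _ eta_gt0).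
have kl_gx : a ^+ 2 / 2 <= kl g x.
  by rewrite /a norm1f_distC; apply: pinsker => *; rewrite ?gibbs_gt0 ?gibbs_sum.
have kl_xG : b ^+ 2 / 2 <= kl x (gibbs G).
  by apply: pinsker => *; rewrite ?gibbs_gt0 ?gibbs_sum.
have : (a ^+ 2 / 2 + b ^+ 2 / 2) / eta <= (kl g x + kl x (gibbs G)) / eta.
  by apply: ler_wpM2r; [rewrite invr_ge0 ltW | lra].
have -> : (a ^+ 2 / 2 + b ^+ 2 / 2) / eta =
    a ^+ 2 / (4 * eta) + a ^+ 2 / (4 * eta) + b ^+ 2 / (2 * eta).
  by field; rewrite gt_eqF.
lra.
Qed.

Variable l : nat -> 'I_K -> R.
Hypothesis l0 : l 0%N = 0.

Definition cumloss n := \sum_(s < n) l s.+1.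
Definition mwu_iterate n := gibbs (cumloss n).
(* Step n uses the last observed loss l n.-1 as hint; steps 0 and 1 both play
   the uniform distribution, as w_{z,0} = w_{z,1} in POMWU. *)
Definition omwu_iterate n := gibbs (cumloss n.-1 + l n.-1).

Lemma omwu_potential_bound n :
  \sum_(i < n) (dotf (l i.+1) (omwu_iterate i.+1)
                + norm1f (omwu_iterate i.+1 - omwu_iterate i) ^+ 2 / (8 * eta))
  + norm1f (omwu_iterate n - mwu_iterate n) ^+ 2 / (4 * eta)
  <= softmin (cumloss n) - softmin (0 : 'I_K -> R)
     + eta * \sum_(i < n) normInff (l i.+1 - l i) ^+ 2.
Proof.
have cum0 : cumloss 0 = 0 by rewrite /cumloss big_ord0.
elim: n => [|n IH].
  rewrite !big_ord0 cum0 mulr0 subrr addr0 add0r /omwu_iterate /mwu_iterate /=.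
  by rewrite cum0 l0 addr0 subrr /norm1f big1 ?expr0n ?mul0r // => k _; rewrite normr0.
have cumS : cumloss n.+1 = cumloss n + l n.+1 by rewrite /cumloss big_ord_recr.
have := omwu_step (cumloss n) (l n) (l n.+1).
rewrite -cumS -[gibbs (cumloss n + l n)]/(omwu_iterate n.+1).
rewrite -[gibbs (cumloss n.+1)]/(mwu_iterate n.+1) -[gibbs (cumloss n)]/(mwu_iterate n).
have := sqr_norm1f_sub_le (omwu_iterate n.+1) (omwu_iterate n) (mwu_iterate n).
rewrite big_ord_recr [X in _ <= _ + eta * X]big_ord_recr /= mulrDr.
move: IH; set e := norm1f (omwu_iterate n.+1 - omwu_iterate n).
set b := norm1f (omwu_iterate n.+1 - mwu_iterate n).
set a := norm1f (omwu_iterate n - mwu_iterate n) => IH sq step.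
have c8_ge0 : 0 <= (8 * eta)^-1 by rewrite invr_ge0 mulr_ge0 // ltW.
have := ler_wpM2r c8_ge0 sq.
have -> : (2 * b ^+ 2 + 2 * a ^+ 2) * (8 * eta)^-1 =
    b ^+ 2 / (2 * eta) - b ^+ 2 / (4 * eta) + a ^+ 2 / (4 * eta).
  by field; rewrite gt_eqF.
have : 0 <= b ^+ 2 / (4 * eta) by rewrite divr_ge0 ?sqr_ge0 // mulr_ge0 // ltW.
lra.
Qed.

Lemma omwu_regret_bound n u : simplexf u ->
  \sum_(i < n) dotf (l i.+1) (omwu_iterate i.+1 - u)
  <= ln K%:R / eta + eta * \sum_(i < n) normInff (l i.+1 - l i) ^+ 2
     - (8 * eta)^-1 * \sum_(i < n) norm1f (omwu_iterate i.+1 - omwu_iterate i) ^+ 2.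
Proof.
move=> u_simplex; have := omwu_potential_bound n.
rewrite softmin0 // big_split /= -mulr_suml mulrC.
have := softmin_le_dotf K_gt0 eta_gt0 (cumloss n) u_simplex.
have -> : dotf u (cumloss n) = \sum_(i < n) dotf u (l i.+1).
  rewrite /dotf /cumloss fct_sumE; under eq_bigr do rewrite mulr_sumr.
  by rewrite exchange_big.
have -> : \sum_(i < n) dotf (l i.+1) (omwu_iterate i.+1 - u) =
    \sum_(i < n) dotf (l i.+1) (omwu_iterate i.+1) - \sum_(i < n) dotf u (l i.+1).
  by rewrite -sumrB; apply: eq_bigr => i _; rewrite dotfBr [dotf _ u]dotfC.
have : 0 <= norm1f (omwu_iterate n - mwu_iterate n) ^+ 2 / (4 * eta).
  by apply: divr_ge0; [apply: sqr_ge0 | rewrite mulr_ge0 // ltW].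
rewrite mulNr opprK; lra.
Qed.

End OptimisticMWU.

Section GameCost.
Variables (R : numDomainType) (J K d : nat) (j : 'I_J).
Variable phij : {ffun 'I_J -> 'I_K} -> 'cV[R]_d.
Implicit Types (V : 'I_J -> 'cV[R]_K) (a : {ffun 'I_J -> 'I_K}).

Definition others_weight V a := \prod_(i < J | i != j) V i (a i) 0.

Lemma prod_with_j (v : 'cV[R]_K) V a :
  \prod_(i < J) with_j j v V i (a i) 0 = v (a j) 0 * others_weight V a.
Proof.
rewrite (bigD1 j) //= /with_j eqxx; congr (_ * _).
by apply: eq_bigr => i /negbTE ->.
Qed.

Lemma trPhiM_mulE V (z : 'cV[R]_d) k :
  ((PhiM j phij V)^T *m z) k 0 =
    \sum_(a : {ffun 'I_J -> 'I_K} | a j == k) others_weight V a * dotc z (phij a).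
Proof.
rewrite mxE; under eq_bigr do rewrite !mxE big_distrl /=.
rewrite exchange_big /=; apply: eq_bigr => a _.
by rewrite /dotc mulr_sumr; apply: eq_bigr => l _; rewrite mulrCA mulrC.
Qed.

Lemma cost_with_j (v : 'cV[R]_K) V (z : 'cV[R]_d) :
  cost phij (with_j j v V) z = \sum_k v k 0 * ((PhiM j phij V)^T *m z) k 0.
Proof.
rewrite /cost (partition_big (fun a : {ffun 'I_J -> 'I_K} => a j) xpredT) //=.
apply: eq_bigr => k _; rewrite trPhiM_mulE mulr_sumr.
by apply: eq_bigr => a /eqP ajk; rewrite prod_with_j ajk mulrA.
Qed.

Section OthersSimplex.
Variable V : 'I_J -> 'cV[R]_K.
Hypothesis V_simplex : forall i, i != j -> simplex (V i).

Lemma others_weight_ge0 a : 0 <= others_weight V a.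
Proof. by apply: prodr_ge0 => i ij; case: (V_simplex ij). Qed.

Lemma sum_others_weight k :
  \sum_(a : {ffun 'I_J -> 'I_K} | a j == k) others_weight V a = 1.
Proof.
pose U i (l : 'I_K) : R := if i == j then (l == k)%:R else V i l 0.
have : \prod_(i < J) \sum_(l < K) U i l = 1.
  apply: big1 => i _; rewrite /U; case: eqP => [_|/eqP ij].
    by rewrite (bigD1 k) //= eqxx big1 ?addr0 // => l /negbTE ->.
  by case: (V_simplex ij).
rewrite bigA_distr_bigA /= => <-; rewrite big_mkcond /=; apply: eq_bigr => a _.
rewrite (bigD1 j) //= {1}/U eqxx; case: eqP => _; last by rewrite mul0r.
by rewrite mul1r; apply: eq_bigr => i /negbTE ij; rewrite /U ij.
Qed.

Lemma norm_trPhiM_mul_le1 (z : 'cV[R]_d) k :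
  (forall a, `|dotc z (phij a)| <= 1) -> `|((PhiM j phij V)^T *m z) k 0| <= 1.
Proof.
move=> phi_bounded; rewrite trPhiM_mulE -(sum_others_weight k).
apply: le_trans (ler_norm_sum _ _ _) _; apply: ler_sum => a _.
rewrite normrM ger0_norm ?others_weight_ge0 // -[X in _ <= X]mulr1.
by apply: ler_wpM2l; [apply: others_weight_ge0 | apply: phi_bounded].
Qed.

End OthersSimplex.
End GameCost.

Section Occurrences.
Variables (m : nat) (Z : nat -> 'I_m).

Lemma occS t z : occ Z t.+1 z = occ Z t z ++ (if Z t == z then [:: t] else [::]).
Proof. by rewrite /occ -addn1 iotaD filter_cat /= add0n; case: ifP. Qed.

Lemma mem_occ T z t : (t \in occ Z T z) = (t < T)%N && (Z t == z).
Proof. by rewrite /occ mem_filter mem_iota add0n andbC. Qed.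

Lemma Z_nth_occ T z i : (i < size (occ Z T z))%N -> Z (nth 0%N (occ Z T z) i) = z.
Proof. by move=> /(mem_nth 0%N); rewrite mem_occ => /andP[_ /eqP]. Qed.

Lemma occ_nth T z i : (i < size (occ Z T z))%N ->
  occ Z (nth 0%N (occ Z T z) i) z = take i (occ Z T z).
Proof.
move=> i_lt; set t := nth 0%N (occ Z T z) i.
move: (mem_nth 0%N i_lt); rewrite -/t mem_occ => /andP[tT /eqP Zt].
have occT : occ Z T z = occ Z t z ++ t :: [seq s <- iota t.+1 (T - t.+1) | Z s == z].
  rewrite /occ -{1}(subnKC (ltnW tT)) iotaD filter_cat add0n -(subnSK tT) /=.
  by rewrite Zt eqxx.
have t_notin : t \notin occ Z t z by rewrite mem_occ ltnn.
have : index t (occ Z T z) = i by apply: index_uniq => //; apply/filter_uniq/iota_uniq.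
rewrite {1}occT index_cat (negbTE t_notin) /= eqxx addn0 => <-.
by rewrite occT take_size_cat.
Qed.

Lemma sum_occ (R : nmodType) T (F : nat -> R) :
  \sum_(t < T) F t = \sum_(z < m) \sum_(t <- occ Z T z) F t.
Proof.
under [RHS]eq_bigr do rewrite big_filter big_mkcond /=.
rewrite exchange_big /= -(big_mkord xpredT) /index_iota subn0; apply: eq_bigr => t _.
by rewrite -big_mkcond /= (big_pred1 (Z t)) // => z; rewrite eq_sym.
Qed.

End Occurrences.

Section PomwuState.
Variables (R : realType) (K d m : nat) (eta : R) (zs : 'I_m -> 'cV[R]_d).
Variables (Z : nat -> 'I_m) (Phi : nat -> 'M[R]_(d, K)).
Local Notation state := (pomwu_state eta zs Z Phi).

Lemma pomwu_state_rho t z : (state t).1 z =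
  \col_k (K%:R^-1 * expR (- eta * \sum_(s <- occ Z t z) ((Phi s)^T *m zs z) k 0)).
Proof.
elim: t z => [|t IH] z /=.
  by apply/matrixP => k l; rewrite !mxE big_nil mulr0 expR0 mulr1.
case: eqP => [->|/eqP zN]; last by rewrite IH occS eq_sym (negbTE zN) cats0.
apply/matrixP => k l; rewrite (ord1 l) !mxE IH occS eqxx big_cat big_seq1 /= !mxE.
by rewrite mulrDr expRD mulrA.
Qed.

Lemma pomwu_state_psi t z : (state t).2 z =
  if occ Z t z is [::] then 0 else Phi (last 0%N (occ Z t z)).
Proof.
elim: t z => [|t IH] z //=; rewrite occS.
case: eqP => [->|/eqP zN]; last by rewrite IH eq_sym (negbTE zN) cats0.
by rewrite eqxx; case: (occ Z t (Z t)) => [|a s] //=; rewrite last_cat.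
Qed.

Variable Zhat : nat -> 'I_m.
Hypothesis K_gt0 : (0 < K)%N.

Lemma pomwu_play_gibbs t (zh := Zhat t)
    (A := fun k => \sum_(s <- occ Z t zh) ((Phi s)^T *m zs zh) k 0)
    (M := fun k => (((state t).2 zh)^T *m zs zh) k 0) :
  (fun k => pomwu_play eta zs Z Zhat Phi t k 0) = gibbs eta (A + M).
Proof.
rewrite /pomwu_play /= -/zh.
have -> : \col_l ((state t).1 zh l 0 * expR (- eta * M l)) =
          \col_l (K%:R^-1 * expR (- eta * (A + M) l)).
  apply/matrixP => l i; rewrite [LHS]mxE [RHS]mxE pomwu_state_rho [X in X * _]mxE.
  by rewrite mulrDr expRD mulrA.
apply/funext => k; rewrite !mxE; under eq_bigr do rewrite !mxE.
rewrite -mulr_sumr /gibbs /partition.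
have KN0 : (K%:R : R) != 0 by rewrite pnatr_eq0 -lt0n.
have ZN0 := lt0r_neq0 (partition_gt0 eta K_gt0 (A + M)); rewrite /partition in ZN0.
by field; rewrite KN0 ZN0.
Qed.

End PomwuState.

(** * Contextual regret of POMWU *)

Section ContextualRegret.
Variables (R : realType) (J K d m T : nat) (j : 'I_J).
Variables (phi : 'I_J -> {ffun 'I_J -> 'I_K} -> 'cV[R]_d) (zs : 'I_m -> 'cV[R]_d).
Variables (Z Zhat : nat -> 'I_m) (W : nat -> 'I_J -> 'cV[R]_K) (eta : R).
Hypotheses (K_gt0 : (0 < K)%N) (eta_gt0 : 0 < eta).
Hypothesis phi_bounded : forall i a z, `|dotc (zs z) (phi i a)| <= 1.
Hypothesis W_simplex : forall t i, i != j -> simplex (W t i).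

Local Notation Phi := (fun t => PhiM j (phi j) (W t)).
Local Notation w := (pomwu_play eta zs Z Zhat Phi).
Local Notation nz z := (size (occ Z T z)).

(* play z i and loss z i are the paper's w_{z,i} and Phi_{z,i}^T z, and
   round z i is the round t^z_{i+1}. *)
Definition round z i := nth 0%N (occ Z T z) i.
Definition loss z i : 'I_K -> R := fun k => ((PhiZ Phi Z T z i)^T *m zs z) k 0.
Definition play z i : 'I_K -> R := fun k => wZ w Z T z i k 0.
Definition miss z i : R := (Zhat (round z i) != z)%:R.

Local Notation omwu z := (omwu_iterate eta (loss z)).

Lemma loss0 z : loss z 0 = 0.
Proof. by apply/funext => k; rewrite /loss /= trmx0 mul0mx mxE. Qed.

Lemma normInff_loss_le1 z i : normInff (loss z i.+1) <= 1.
Proof.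
apply: normInff_le => // k; apply: norm_trPhiM_mul_le1 => [i' ij|a].
  exact: W_simplex.
exact: phi_bounded.
Qed.

Lemma pomwu_play_simplexf t : simplexf (fun k => w t k 0).
Proof. by rewrite pomwu_play_gibbs //; apply: gibbs_simplexf. Qed.

Lemma play_simplexf z i : simplexf (play z i).
Proof. by case: i => [|i]; [apply: unif_simplexf | apply: pomwu_play_simplexf]. Qed.

Lemma omwu_simplexf z i : simplexf (omwu z i).
Proof. exact: gibbs_simplexf. Qed.

Lemma play0 z : play z 0 = omwu z 0.
Proof.
rewrite /omwu_iterate /cumloss big_ord0 loss0 addr0 gibbs0.
by apply/funext => k; rewrite /play /= mxE.
Qed.

Lemma play_hit z i : (i < nz z)%N -> Zhat (round z i) = z -> play z i.+1 = omwu z i.+1.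
Proof.
move=> i_lt hit; rewrite -[play z i.+1]/(fun k => w (round z i) k 0).
rewrite pomwu_play_gibbs // /omwu_iterate /= hit occ_nth //.
have -> : cumloss (loss z) i =
    fun k => \sum_(s <- take i (occ Z T z)) ((Phi s)^T *m zs z) k 0.
  apply/funext => k; rewrite /cumloss fct_sumE (big_nth 0%N) size_takel ?(ltnW i_lt) //.
  by rewrite big_mkord; apply: eq_bigr => s _; rewrite nth_take.
congr (gibbs eta (_ + _)); rewrite pomwu_state_psi occ_nth //.
case: i i_lt {hit} => [|i] i_lt; first by rewrite take0.
have : size (take i.+1 (occ Z T z)) = i.+1 by rewrite size_takel // ltnW.
case E : take => [|a s] //= _; rewrite -[last a s]/(last 0%N (a :: s)) -E.
by rewrite -nth_last size_takel ?(ltnW i_lt) // nth_take.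
Qed.

Definition hint_var z := \sum_(i < nz z) normInff (loss z i.+1 - loss z i) ^+ 2.
Definition omwu_moves z := \sum_(i < nz z) norm1f (omwu z i.+1 - omwu z i) ^+ 2.
Definition play_moves z := \sum_(i < nz z) norm1f (play z i.+1 - play z i) ^+ 2.
Definition misses z := \sum_(i < nz z) miss z i.

Lemma miss_ge0 z i : 0 <= miss z i.
Proof. exact: ler0n. Qed.

Lemma context_regret_omwu z u : simplexf u ->
  \sum_(i < nz z) dotf (loss z i.+1) (play z i.+1 - u)
  <= ln K%:R / eta + eta * hint_var z - (8 * eta)^-1 * omwu_moves z + 2 * misses z.
Proof.
move=> u_simplex; have := omwu_regret_bound K_gt0 eta_gt0 (loss0 z) (nz z) u_simplex.
have -> : \sum_(i < nz z) dotf (loss z i.+1) (play z i.+1 - u) =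
    \sum_(i < nz z) dotf (loss z i.+1) (omwu z i.+1 - u)
    + \sum_(i < nz z) dotf (loss z i.+1) (play z i.+1 - omwu z i.+1).
  by rewrite -big_split /=; apply: eq_bigr => i _; rewrite !dotfBr; ring.
suff : \sum_(i < nz z) dotf (loss z i.+1) (play z i.+1 - omwu z i.+1) <= 2 * misses z.
  by rewrite /hint_var /omwu_moves; lra.
rewrite /misses mulr_sumr; apply: ler_sum => i _; rewrite /miss.
case: eqP => [hit|_] /=.
  rewrite play_hit // subrr mulr0 /dotf big1 // => k _; exact: mulr0.
(* A mispredicted round costs at most |loss|_oo * |play - omwu|_1 <= 1 * 2. *)
rewrite mulr1 dotfC; apply: le_trans (dotf_le_norm1f_normInff _ _) _.
have := normInff_loss_le1 z i; have := normInff_ge0 (loss z i.+1).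
have := norm1f_sub_simplexf (play_simplexf z i.+1) (omwu_simplexf z i.+1).
have := norm1f_ge0 (play z i.+1 - omwu z i.+1); nra.
Qed.

Definition prev_miss z i : R := if i is i'.+1 then miss z i' else 0.

Lemma prev_miss_ge0 z i : 0 <= prev_miss z i.
Proof. by case: i => //= i; apply: miss_ge0. Qed.

Lemma play_move_le z i : (i < nz z)%N ->
  norm1f (play z i.+1 - play z i) ^+ 2 <=
  norm1f (omwu z i.+1 - omwu z i) ^+ 2 + 4 * miss z i + 4 * prev_miss z i.
Proof.
move=> i_lt; have := miss_ge0 z i; have := prev_miss_ge0 z i.
have [[-> ->]|one_miss] : (play z i.+1 = omwu z i.+1 /\ play z i = omwu z i)
    \/ 1 <= miss z i + prev_miss z i.
- rewrite {1}/miss; case: eqP => [hit|_] /=; last first.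
    by right; rewrite lerDl prev_miss_ge0.
  case: i i_lt hit => [|i] i_lt hit; first by left; rewrite play0 play_hit.
  rewrite /prev_miss /miss; case: eqP => [hit'|_] /=; last by right; rewrite add0r.
  by left; rewrite !play_hit // ltnW.
- by have := sqr_ge0 (norm1f (omwu z i.+1 - omwu z i)); lra.
have := sqr_norm1f_sub_simplexf (play_simplexf z i.+1) (play_simplexf z i).
by have := sqr_ge0 (norm1f (omwu z i.+1 - omwu z i)); lra.
Qed.

Lemma play_moves_le z : play_moves z <= omwu_moves z + 8 * misses z.
Proof.
rewrite /play_moves; apply: le_trans (ler_sum _ (fun i _ => play_move_le (ltn_ord i))) _.
have : \sum_(i < nz z) prev_miss z i <= misses z.
  rewrite /misses; case: (nz z) => [|n]; first by rewrite !big_ord0.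
  rewrite big_ord_recl /= add0r big_ord_recr /=.
  by have := miss_ge0 z n; set S := \sum_(i < n) _; lra.
by rewrite !big_split /= -!mulr_sumr -/(omwu_moves z) -/(misses z); lra.
Qed.

Lemma context_regret z u : simplexf u ->
  \sum_(i < nz z) dotf (loss z i.+1) (play z i.+1 - u)
  <= ln K%:R / eta + eta * hint_var z - (16 * eta)^-1 * play_moves z
     + (eta^-1 + 2) * misses z.
Proof.
move=> u_simplex; have := context_regret_omwu z u_simplex.
have c_ge0 : 0 <= (8 * eta)^-1 by rewrite invr_ge0 mulr_ge0 // ltW.
have := ler_wpM2l c_ge0 (play_moves_le z).
have W_ge0 : 0 <= (16 * eta)^-1 * play_moves z.
  apply: mulr_ge0; first by rewrite invr_ge0 mulr_ge0 // ltW.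
  by apply: sumr_ge0 => i _; apply: sqr_ge0.
have -> : (8 * eta)^-1 * play_moves z =
    (16 * eta)^-1 * play_moves z + (16 * eta)^-1 * play_moves z.
  by field; rewrite gt_eqF.
have -> : (8 * eta)^-1 * (omwu_moves z + 8 * misses z) =
    (8 * eta)^-1 * omwu_moves z + eta^-1 * misses z.
  by field; rewrite gt_eqF.
rewrite [(_ + 2) * _]mulrDl; lra.
Qed.

Lemma regret_gap_le (pi : 'I_m -> 'cV[R]_K) : (forall z, simplex (pi z)) ->
  \sum_(t < T) cost (phi j) (with_j j (w t) (W t)) (zs (Z t))
  - \sum_(t < T) cost (phi j) (with_j j (pi (Z t)) (W t)) (zs (Z t))
  <= \sum_(z < m) (ln K%:R / eta + eta * hint_var z - (16 * eta)^-1 * play_moves z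
                   + (eta^-1 + 2) * misses z).
Proof.
move=> pi_simplex; rewrite -sumrB.
rewrite (@sum_occ _ Z _ T (fun t => cost (phi j) (with_j j (w t) (W t)) (zs (Z t))
                          - cost (phi j) (with_j j (pi (Z t)) (W t)) (zs (Z t)))).
apply: ler_sum => z _.
apply: le_trans (context_regret z (pi_simplex z)).
rewrite (big_nth 0%N) big_mkord le_eqVlt; apply/orP; left; apply/eqP.
apply: eq_bigr => i _; rewrite Z_nth_occ // !cost_with_j -sumrB.
by rewrite /dotf; apply: eq_bigr => k _; rewrite /loss /play !fctE /=; ring.
Qed.

Lemma regret_le :
  regret j (phi j) zs Z W w T
  <= \sum_(z < m) (ln K%:R / eta + eta * hint_var z - (16 * eta)^-1 * play_moves z
                   + (eta^-1 + 2) * misses z).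
Proof.
rewrite /regret lerBlDr -lerBlDl; apply: lb_le_inf.
  eexists; exists (fun=> unif R K) => //= z; exact: unif_simplexf.
by move=> _ [pi pi_simplex <-]; have := regret_gap_le pi_simplex; lra.
Qed.

Lemma hint_varE z :
  \sum_(1 <= i < (nz z).+1)
    normInf ((PhiZ Phi Z T z i - PhiZ Phi Z T z i.-1)^T *m zs z) ^+ 2 = hint_var z.
Proof.
rewrite big_add1 /= big_mkord; apply: eq_bigr => i _; congr (_ ^+ 2).
by apply: eq_bigr => k _; rewrite linearB /= mulmxBl [in LHS]mxE [X in _ + X]mxE.
Qed.

Lemma play_movesE z :
  \sum_(1 <= i < (nz z).+1) norm1 (wZ w Z T z i - wZ w Z T z i.-1) ^+ 2 = play_moves z.
Proof.
rewrite big_add1 /= big_mkord; apply: eq_bigr => i _; congr (_ ^+ 2).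
by apply: eq_bigr => k _; rewrite [in LHS]mxE [X in _ + X]mxE.
Qed.

Lemma LmissE : Lmiss R Z Zhat T = \sum_(z < m) misses z.
Proof.
rewrite /Lmiss (@sum_occ _ Z _ T (fun t => (Zhat t != Z t)%:R)); apply: eq_bigr => z _.
rewrite (big_nth 0%N) big_mkord; apply: eq_bigr => i _.
by rewrite /miss /round Z_nth_occ.
Qed.

End ContextualRegret.

Lemma invr_add_ge2 (R : realFieldType) (x : R) : 0 < x -> 2 <= x^-1 + x.
Proof.
move=> x_gt0; rewrite -subr_ge0.
have -> : x^-1 + x - 2 = (x - 1) ^+ 2 / x by field; rewrite gt_eqF.
by rewrite divr_ge0 ?sqr_ge0 ?ltW.
Qed.

Theorem proposition5 (R : realType) (J K d m T : nat) (j : 'I_J)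
  (phi : 'I_J -> {ffun 'I_J -> 'I_K} -> 'cV[R]_d)
  (zs : 'I_m -> 'cV[R]_d) (Z Zhat : nat -> 'I_m)
  (W : nat -> 'I_J -> 'cV[R]_K) (eta : R) :
  (0 < K)%N ->
  injective zs ->
  (forall (i : 'I_J) (a : {ffun 'I_J -> 'I_K}) (z : 'I_m), `|dotc (zs z) (phi i a)| <= 1) ->
  (forall (t : nat) (i : 'I_J), i != j -> simplex (W t i)) ->
  0 < eta ->
  let Phi := fun t => PhiM j (phi j) (W t) in
  let w := pomwu_play eta zs Z Zhat Phi in
  let L := Lmiss R Z Zhat T in
  let n := fun z => size (occ Z T z) in
  regret j (phi j) zs Z W w T <=
    ((5 + ln K%:R) * L + m%:R * ln K%:R) / eta
    + eta * (\sum_(z < m) \sum_(1 <= i < (n z).+1)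
               normInf ((PhiZ Phi Z T z i - PhiZ Phi Z T z i.-1)^T *m zs z) ^+ 2
             + 4 * L)
    - (16 * eta)^-1 * \sum_(z < m) \sum_(1 <= i < (n z).+1)
               norm1 (wZ w Z T z i - wZ w Z T z i.-1) ^+ 2.
Proof.
(* Contexts only enter through their indices, so injectivity of zs is not needed. *)
move=> K_gt0 _ phi_bounded W_simplex eta_gt0 /=.
rewrite LmissE.
under eq_bigr do rewrite hint_varE.
under [X in _ - _ * X]eq_bigr do rewrite play_movesE.
apply: le_trans (regret_le T Z Zhat K_gt0 eta_gt0 phi_bounded W_simplex) _.
rewrite !big_split /= sumrN sumr_const card_ord -!mulr_sumr -[_ *+ m]mulr_natl.
set H := (X in eta * (X + _)); set M := (X in 4 * X).
set V := (X in (16 * eta)^-1 * X).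
have : 0 <= M * (4 * eta^-1 + ln K%:R * eta^-1 + 4 * eta - 2).
  apply: mulr_ge0; first by apply: sumr_ge0 => z _; apply: sumr_ge0 => i _; apply: miss_ge0.
  have := invr_add_ge2 eta_gt0.
  have : 0 <= ln K%:R * eta^-1 by rewrite mulr_ge0 ?ln_ge0 ?ler1n // invr_ge0 ltW.
  lra.
have -> : ((5 + ln K%:R) * M + m%:R * ln K%:R) / eta + eta * (H + 4 * M)
    - (16 * eta)^-1 * V = m%:R * (ln K%:R / eta) + eta * H - (16 * eta)^-1 * V
    + (eta^-1 + 2) * M + M * (4 * eta^-1 + ln K%:R * eta^-1 + 4 * eta - 2) by ring.
by rewrite lerDl.
Qed.
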